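(* The set $E(K_4)\times E(K_6)$ can be partitioned into $14$ blocks; that is, $g(K_4,K_6)\le 14<(4-1)(6-1)$.
   Context: $K_m$ is the complete graph on $m$ vertices. A complete bipartite subgraph of a graph $G$ has two disjoint nonempty vertex classes $X,Y$ and edge set all $xy$ with $x\in X,y\in Y$. For graphs $G,H$, a block is a set $E(B_1)\times E(B_2)$ where $B_1$ is a complete bipartite subgraph of $G$ and $B_2$ a complete bipartite subgraph of $H$; $g(G,H)$ is the minimum number of blocks partitioning $E(G)\times E(H)$. *)

From mathcomp Require Import all_boot.
Set Implicit Arguments. Unset Strict Implicit. Unset Printing Implicit Defensive.

(* A finite simple graph on vertex type V is given by an adjacency relation
   (assumed symmetric and irreflexive where relevant). Edges are the
   2-element vertex sets {u,v} with u adjacent to v. *)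
Definition edges (V : finType) (adj : rel V) : {set {set V}} :=
  [set [set u; v] | u in V, v in [pred w | adj u w]].

Definition Kadj (m : nat) : rel 'I_m := fun x y => x != y.

Definition cbip (V : finType) (adj : rel V) (X Y : {set V}) : bool :=
  [&& X != set0, Y != set0, [disjoint X & Y] &
      [forall x in X, forall y in Y, adj x y]].

Definition cbip_edges (V : finType) (X Y : {set V}) : {set {set V}} :=
  [set [set x; y] | x in X, y in Y].

Definition is_block (V W : finType) (adjG : rel V) (adjH : rel W)
    (B : {set {set V} * {set W}}) : Prop :=
  exists (X1 Y1 : {set V}) (X2 Y2 : {set W}),
    [/\ cbip adjG X1 Y1, cbip adjH X2 Y2 &
        B = setX (cbip_edges X1 Y1) (cbip_edges X2 Y2)].

Definition block_partition (V W : finType) (adjG : rel V) (adjH : rel W)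
    (P : {set {set {set V} * {set W}}}) : Prop :=
  partition P (setX (edges adjG) (edges adjH)) /\
  (forall B, B \in P -> is_block adjG adjH B).

From mathcomp Require Import all_boot.

Set Implicit Arguments. Unset Strict Implicit. Unset Printing Implicit Defensive.

(* The three perfect matchings M_1, M_2, M_3 of K_4 have complements
   C_a = K_4 - M_a that are 4-cycles, i.e. bicliques K_{2,2}.  Take pairwise
   disjoint subgraphs A_1, A_2, A_3 of K_6.  An edge e of M_a lies exactly in
   C_b and C_c, {a, b, c} = {1, 2, 3}, so the blocks C_b x A_b and C_c x A_c
   cover {e} x (A_b u A_c), leaving {e} x (K_6 - A_b - A_c) to be covered.
   Hence biclique partitions of the A_a and of the K_6 - A_b - A_c give a block
   partition; with the A_a split into 2, 2, 2 bicliques and the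
   K_6 - A_b - A_c into 1, 1, 2 bicliques this takes 6 + 2 * (1 + 1 + 2) = 14
   blocks. *)

Section Bicliques.

Variables (V : finType) (adj : rel V).

Lemma edgesP (e : {set V}) :
  e \in edges adj -> exists u v, adj u v /\ e = [set u; v].
Proof. by case/imset2P => u v _; rewrite inE => uv ->; exists u, v. Qed.

Lemma cbip_edges_sub (X Y : {set V}) :
  cbip adj X Y -> cbip_edges X Y \subset edges adj.
Proof.
case/and4P => _ _ _ /forall_inP XYadj; apply/subsetP => _ /imset2P[x y xX yY ->].
by apply/imset2P; exists x y; rewrite // inE (forall_inP (XYadj x xX)).
Qed.

Lemma cbip_edges_neq0 (X Y : {set V}) : cbip adj X Y -> cbip_edges X Y != set0.
Proof.
case/and4P => /set0Pn[x xX] /set0Pn[y yY] _ _.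
by apply/set0Pn; exists [set x; y]; apply/imset2P; exists x y.
Qed.

Lemma mem_cbip_edges (X Y : {set V}) (u v : V) : u != v ->
  ([set u; v] \in cbip_edges X Y) = (u \in X) && (v \in Y) || (v \in X) && (u \in Y).
Proof.
move=> uv; apply/imset2P/idP
  => [[x y xX yY uv_xy] | /orP[/andP[uX vY] | /andP[vX uY]]].
- have: u \in [set x; y] by rewrite -uv_xy set21.
  have: v \in [set x; y] by rewrite -uv_xy set22.
  rewrite !inE => /orP[]/eqP ev /orP[]/eqP eu; subst u v; rewrite ?eqxx // in uv.
    by rewrite xX yY /= orbT.
  by rewrite xX yY.
- by exists u v.
- by exists v u; rewrite // setUC.
Qed.

End Bicliques.

Lemma cbip_Kadj n (X Y : {set 'I_n}) :
  cbip (@Kadj n) X Y = [&& X != set0, Y != set0 & [disjoint X & Y]].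
Proof.
rewrite /cbip; have [XY | _] := boolP [disjoint X & Y]; last by rewrite /= !andbF.
suff -> : [forall x in X, forall y in Y, Kadj x y] by rewrite !andbT.
apply/forall_inP => x xX; apply/forall_inP => y yY.
by apply: contraTneq yY => <-; rewrite (disjointFr XY xX).
Qed.

Section BlockPartition.

Variables (V W : finType) (adjG : rel V) (adjH : rel W).

Local Notation edge_pairs := (setX (edges adjG) (edges adjH)).
Local Notation blockT := {set {set V} * {set W}}.

Lemma block_sub B : is_block adjG adjH B -> B \subset edge_pairs.
Proof. by case=> X1 [Y1 [X2 [Y2 [b1 b2 ->]]]]; rewrite setXS ?cbip_edges_sub. Qed.

Lemma block_neq0 B : is_block adjG adjH B -> B != set0.
Proof.
case=> X1 [Y1 [X2 [Y2 [b1 b2 ->]]]].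
have /set0Pn[e1 e1B] := cbip_edges_neq0 b1; have /set0Pn[e2 e2B] := cbip_edges_neq0 b2.
by apply/set0Pn; exists (e1, e2); rewrite in_setX e1B e2B.
Qed.

Lemma block_partition_seq (s : seq blockT) :
  {in s, forall B, is_block adjG adjH B} ->
  (forall c, c \in edge_pairs -> count (fun B : blockT => c \in B) s = 1) ->
  block_partition adjG adjH [set B in s] /\ #|[set B in s]| = size s.
Proof.
move=> sblocks exact_cover.
have count_in_block c B : B \in s -> c \in B -> count (fun B' : blockT => c \in B') s = 1.
  by move=> Bs cB; rewrite exact_cover // (subsetP (block_sub (sblocks B Bs))).
have one_block c B1 B2 : B1 \in s -> B2 \in s -> c \in B1 -> c \in B2 -> B1 = B2.
  move=> B1s B2s cB1 cB2; apply/eqP; apply: contraT => B12.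
  have: size [:: B1; B2] <= size [seq B : blockT <- s | c \in B].
    by apply: uniq_leq_size => [|B]; rewrite /= ?inE ?andbT // mem_filter => /orP[]/eqP->;
       rewrite ?cB1 ?cB2.
  by rewrite size_filter (count_in_block c B1).
have s_uniq : uniq s.
  apply: count_mem_uniq => B; case: (boolP (B \in s)) => [Bs | /count_memPn //].
  have /set0Pn[c cB] := block_neq0 (sblocks B Bs).
  have B_counted : 0 < count_mem B s by rewrite -has_count has_pred1.
  have: count_mem B s <= count (fun B' : blockT => c \in B') s.
    by apply: sub_count => B' /eqP->.
  by rewrite (count_in_block c B) // => B_once; apply/eqP; rewrite eqn_leq B_once.
split; last by rewrite cardsE; apply/card_uniqP.
split=> [|B]; last by rewrite inE => /sblocks.
apply/and3P; split.
- apply/eqP/setP => c; apply/bigcupP/idP => [[B] | cE].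
    by rewrite inE => /sblocks/block_sub/subsetP; apply.
  have /hasP[B Bs cB] : has (fun B : blockT => c \in B) s by rewrite has_count exact_cover.
  by exists B; rewrite ?inE.
- apply/trivIsetP => B1 B2; rewrite !inE => B1s B2s B12.
  apply/pred0P => c /=; apply/negP => /andP[cB1 cB2].
  by rewrite (one_block c B1 B2) ?eqxx in B12.
- by apply/negP; rewrite inE => /sblocks/block_neq0; rewrite eqxx.
Qed.

End BlockPartition.

Definition nset n (s : seq nat) : {set 'I_n} := [set i : 'I_n | val i \in s].

Lemma in_nset n s (i : 'I_n) : (i \in nset n s) = (val i \in s).
Proof. by rewrite inE. Qed.

Lemma nset_neq0 n s : has (fun a => a < n) s -> nset n s != set0.
Proof. by case/hasP => a as_ an; apply/set0Pn; exists (Ordinal an); rewrite in_nset. Qed.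

Lemma disjoint_nset n s t : ~~ has (mem t) s -> [disjoint nset n s & nset n t].
Proof.
move=> /hasPn st; apply/pred0P => i /=; rewrite !in_nset.
by apply/negP => /andP[/st/negP].
Qed.

Definition biclique_spec := (seq nat * seq nat)%type.

Definition spec_ok n (b : biclique_spec) : bool :=
  [&& has (fun a => a < n) b.1, has (fun a => a < n) b.2 & ~~ has (mem b.2) b.1].

Definition spec_covers (b : biclique_spec) (u v : nat) : bool :=
  (u \in b.1) && (v \in b.2) || (v \in b.1) && (u \in b.2).

Definition spec_edges n (b : biclique_spec) : {set {set 'I_n}} :=
  cbip_edges (nset n b.1) (nset n b.2).

Lemma cbip_spec n b : spec_ok n b -> cbip (@Kadj n) (nset n b.1) (nset n b.2).
Proof. by case/and3P => b1 b2 b12; rewrite cbip_Kadj !nset_neq0 ?disjoint_nset. Qed.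

Lemma mem_spec_edges n b (u v : 'I_n) :
  u != v -> ([set u; v] \in spec_edges n b) = spec_covers b u v.
Proof. by move=> uv; rewrite mem_cbip_edges // !in_nset. Qed.

Definition spec_block m n (gh : biclique_spec * biclique_spec) :
  {set {set 'I_m} * {set 'I_n}} :=
  setX (spec_edges m gh.1) (spec_edges n gh.2).

Definition all_below2 n (P : nat -> nat -> bool) : bool :=
  all (fun a => all (P a) (iota 0 n)) (iota 0 n).

Lemma all_below2P n P : all_below2 n P -> forall i j : 'I_n, P i j.
Proof.
move=> /allP Pn i j.
have iota_n (k : 'I_n) : val k \in iota 0 n by rewrite mem_iota add0n ltn_ord.
exact: allP (Pn _ (iota_n i)) _ (iota_n j).
Qed.

Definition block_cover_certificate m n (specs : seq (biclique_spec * biclique_spec)) :=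
  all (fun gh => spec_ok m gh.1 && spec_ok n gh.2) specs &&
  all_below2 m (fun u v => all_below2 n (fun p q => (u != v) && (p != q) ==>
    (count (fun gh => spec_covers gh.1 u v && spec_covers gh.2 p q) specs == 1))).

Lemma block_partition_of_certificate m n specs :
  block_cover_certificate m n specs ->
  let P := [set B in map (spec_block m n) specs] in
  block_partition (@Kadj m) (@Kadj n) P /\ #|P| = size specs.
Proof.
case/andP => /allP specs_ok /all_below2P exact_cover.
rewrite -(size_map (spec_block m n)); apply: block_partition_seq.
  move=> _ /mapP[gh /specs_ok/andP[g_ok h_ok] ->].
  by exists (nset m gh.1.1), (nset m gh.1.2), (nset n gh.2.1), (nset n gh.2.2);
    rewrite !cbip_spec.
case=> e1 e2; rewrite in_setX => /andP[/edgesP[u [v [uv ->]]] /edgesP[p [q [pq ->]]]].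
rewrite /Kadj in uv pq.
have /all_below2P/(_ p q) := exact_cover u v; rewrite uv pq /= => /eqP <-.
rewrite count_map; apply: eq_count => gh.
by rewrite /= in_setX !mem_spec_edges.
Qed.

(* Each entry pairs bicliques of K_4 with bicliques of K_6; the first three
   entries are C_a x A_a, the last three {e} x (K_6 - A_b - A_c) for e in M_a. *)
Definition K4K6_parts : seq (seq biclique_spec * seq biclique_spec) :=
  [:: ([:: ([:: 0; 1], [:: 2; 3])], [:: ([:: 0; 2], [:: 5]); ([:: 1; 2], [:: 3])]);
      ([:: ([:: 0; 2], [:: 1; 3])], [:: ([:: 1], [:: 0; 4]); ([:: 3], [:: 4; 5])]);
      ([:: ([:: 0; 3], [:: 1; 2])], [:: ([:: 0; 1], [:: 2]); ([:: 4], [:: 0; 2; 5])]);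
      ([:: ([:: 0], [:: 1]); ([:: 2], [:: 3])], [:: ([:: 0; 1; 2], [:: 3; 5])]);
      ([:: ([:: 0], [:: 2]); ([:: 1], [:: 3])], [:: ([:: 1; 3], [:: 0; 4; 5])]);
      ([:: ([:: 0], [:: 3]); ([:: 1], [:: 2])],
         [:: ([:: 0], [:: 2; 3; 4]); ([:: 1; 4], [:: 2; 5])])].

Definition K4K6_specs : seq (biclique_spec * biclique_spec) :=
  flatten [seq [seq (g, h) | g <- gh.1, h <- gh.2] | gh <- K4K6_parts].

Lemma K4K6_certificate : block_cover_certificate 4 6 K4K6_specs.
Proof. by vm_compute. Qed.

Theorem mainTheorem8 :
  (exists P : {set {set {set 'I_4} * {set 'I_6}}},
      block_partition (@Kadj 4) (@Kadj 6) P /\ #|P| = 14)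
  /\ 14 < (4 - 1) * (6 - 1).
Proof.
split=> //.
by exists [set B in map (spec_block 4 6) K4K6_specs];
  apply: block_partition_of_certificate K4K6_certificate.
Qed.
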